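(* Let $n\ge2$ be an integer and let $S(K_n)$ be the complete subdivision of $K_n$. Then (i) $\chi_{\mathrm{so}}(S(K_n))=n$, except that $\chi_{\mathrm{so}}(S(K_2))=3$ and $\chi_{\mathrm{so}}(S(K_4))=5$; (ii) $\alpha_{\mathrm{od}}(S(K_n))=\binom n2$ if $n$ is even, and $\alpha_{\mathrm{od}}(S(K_n))=\binom{n-1}2+1$ if $n$ is odd.
   Context: $S(K_n)$ is obtained from the complete graph $K_n$ by subdividing every edge once by a new vertex. An odd independent set in $G=(V,E)$ is an independent set $S$ such that every $v\in V\setminus S$ has either no neighbor or an odd number of neighbors in $S$; $\alpha_{\mathrm{od}}(G)$ is its maximum size. A strong odd coloring is a proper coloring such that for each vertex $v$ every color on $N(v)$ occurs an odd number of times on $N(v)$; $\chi_{\mathrm{so}}(G)$ is the minimum number of colors. *)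

From mathcomp Require Import all_boot.
Set Implicit Arguments. Unset Strict Implicit. Unset Printing Implicit Defensive.

Section Graphs.
Variable T : finType.
Variable e : rel T.

Definition nbhd (v : T) : {set T} := [set u | e v u].

Definition proper_coloring (k : nat) (c : T -> 'I_k) : Prop :=
  forall u v, e u v -> c u != c v.

Definition strong_odd_coloring (k : nat) (c : T -> 'I_k) : Prop :=
  proper_coloring c /\
  forall v u, u \in nbhd v -> odd #|[set w in nbhd v | c w == c u]|.

Definition chi_so_is (k : nat) : Prop :=
  (exists c : T -> 'I_k, strong_odd_coloring c) /\
  (forall k', k' < k -> ~ exists c : T -> 'I_k', strong_odd_coloring c).

Definition independent (S : {set T}) : bool :=
  [forall x in S, forall y in S, ~~ e x y].

Definition odd_independent (S : {set T}) : bool :=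
  independent S &&
  [forall v in ~: S, (#|nbhd v :&: S| == 0) || odd #|nbhd v :&: S|].

Definition alpha_od : nat := \max_(S : {set T} | odd_independent S) #|S|.
End Graphs.

(* The complete subdivision S(K_n): original vertices 'I_n, and one
   subdivision vertex for each edge {i,j} of K_n, encoded as a pair (i,j)
   with i < j. *)
Definition SKn_V (n : nat) : finType :=
  ('I_n + {p : 'I_n * 'I_n | p.1 < p.2})%type.

Definition SKn_adj (n : nat) : rel (SKn_V n) :=
  fun x y =>
    match x, y with
    | inl i, inr p => (i == (val p).1) || (i == (val p).2)
    | inr p, inl i => (i == (val p).1) || (i == (val p).2)
    | _, _ => false
    end.

(* Coloring every original vertex i of S(K_n) by i, a strong odd coloring is
   the same as a coloring of the edges of K_n in which the edge ij avoids the
   colors i and j and each color occurs an odd number of times, or not at all,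
   at every vertex.  For odd m >= n the midpoint coloring ij |-> (i + j)/2
   mod m has singleton color classes; for even n >= 6, write n = m + 3 with m
   odd and glue midpoint colorings of K_m and of a triangle.  Conversely the
   two ends of a subdivided edge need distinct colors (else the subdivision
   vertex sees one color twice), so n colors are needed, and 3 when n = 2.
   For n = 4 with 4 colors every color class at a vertex has size 0 or 1, so
   by the handshake lemma each color meets at most 2 of the 4 vertices: at
   most 8 of the 12 vertex-edge incidences are colored.

   An odd independent set contains at most one original vertex, since the
   subdivision vertex of an edge joining two of them would see exactly two.
   If it contains an original vertex a, its subdivision vertices avoid a; if
   it contains none and n is odd, the handshake lemma forbids all n degrees
   to be odd, so again some original vertex is avoided.  The bounds are
   attained by all subdivision vertices (n even) and by a vertex a together
   with the subdivision vertices of the edges avoiding a (n odd). *)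

From mathcomp Require Import all_boot zify.
Set Implicit Arguments. Unset Strict Implicit. Unset Printing Implicit Defensive.

Notation edge n := {p : 'I_n * 'I_n | p.1 < p.2}.

Section Edges.
Variable n : nat.
Implicit Types (i j a : 'I_n) (p q : edge n).

Definition incident i p := (i == (val p).1) || (i == (val p).2).

Definition other_end i p := if (val p).1 == i then (val p).2 else (val p).1.

Lemma edge_neq p : (val p).1 != (val p).2.
Proof. by case: p => [[a b] /= lt_ab]; rewrite neq_ltn lt_ab. Qed.

Lemma other_end_neq i p : incident i p -> other_end i p != i.
Proof.
rewrite /incident /other_end => /orP[] /eqP ->; first by rewrite eqxx eq_sym edge_neq.
by rewrite (negbTE (edge_neq p)) edge_neq.
Qed.

Lemma incident_other_end i a p :
  incident i p -> incident a p = (a == i) || (a == other_end i p).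
Proof.
rewrite /incident /other_end => /orP[] /eqP ->; rewrite ?eqxx //.
by rewrite (negbTE (edge_neq p)) orbC.
Qed.

Lemma edge_ends_other_end (T : Type) (f : 'I_n -> 'I_n -> T) i p :
  (forall i j, f i j = f j i) -> incident i p ->
  f (val p).1 (val p).2 = f i (other_end i p).
Proof.
rewrite /incident /other_end => f_sym /orP[] /eqP ->; rewrite ?eqxx //.
by rewrite (negbTE (edge_neq p)) f_sym.
Qed.

Lemma edge_inj p q : (forall a, incident a p = incident a q) -> p = q.
Proof.
case: p q => [[a b] lt_ab] [[a' b'] lt_ab'] inc_pq; apply/val_inj => /=.
have := inc_pq a; have := inc_pq b; have := inc_pq a'; have := inc_pq b'.
rewrite /incident /= !eqxx /= !orbT => h1 h2 h3 h4 {inc_pq}.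
by congr pair; apply/val_inj; move: h1 h2 h3 h4 lt_ab lt_ab'; rewrite -!val_eqE /=; lia.
Qed.

Lemma other_end_inj i : {in [pred q | incident i q] &, injective (other_end i)}.
Proof.
move=> p q inc_ip inc_iq eq_pq; apply: edge_inj => a.
by rewrite (incident_other_end a inc_ip) (incident_other_end a inc_iq) eq_pq.
Qed.

Lemma other_end_onto i j : j != i -> exists2 q, incident i q & other_end i q = j.
Proof.
case: (ltngtP i j) => [lt_ij|lt_ji|/val_inj->]; last by rewrite eqxx.
  by exists (exist _ (i, j) lt_ij); rewrite /incident /other_end /= eqxx.
move=> ne_ji; exists (exist _ (j, i) lt_ji); rewrite /incident /other_end /= ?eqxx ?orbT //.
by rewrite (negbTE ne_ji).
Qed.

Lemma card_incident_other_end i (P : pred 'I_n) :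
  #|[set q | incident i q && P (other_end i q)]| = #|[set j | (j != i) && P j]|.
Proof.
rewrite -(card_in_imset (f := other_end i)); last first.
  by move=> p q; rewrite !inE => /andP[inc_ip _] /andP[inc_iq _]; apply: other_end_inj.
apply: eq_card => j; rewrite [in RHS]inE; apply/imsetP/andP.
  by case=> q; rewrite inE => /andP[inc_iq Pq] ->; rewrite other_end_neq.
case=> ne_ji Pj; have [q inc_iq eq_qj] := other_end_onto ne_ji.
by exists q; rewrite ?inE ?inc_iq ?eq_qj.
Qed.

Lemma card_incident i : #|[set q | incident i q]| = n.-1.
Proof.
transitivity #|[set j | (j != i) && predT j]|.
  by rewrite -card_incident_other_end; apply: eq_card => q; rewrite !inE andbT.
by rewrite -[in RHS](card_ord n) -(cardC1 i); apply: eq_card => j; rewrite !inE andbT.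
Qed.

Lemma handshake (P : pred (edge n)) :
  \sum_i #|[set q | incident i q && P q]| = #|[set q | P q]| * 2.
Proof.
under eq_bigr do rewrite -sum1dep_card.
rewrite (exchange_big_dep P) /=; last by move=> i q _ /andP[].
rewrite -sum1dep_card big_distrl /=; apply: eq_bigr => q Pq.
rewrite sum1dep_card mul1n; have := cards2 (val q).1 (val q).2; rewrite edge_neq => <-.
by apply: eq_card => i; rewrite !inE Pq andbT.
Qed.

Lemma card_edges : #|{: edge n}| = 'C(n, 2).
Proof.
have deg i : #|[set q | incident i q && predT q]| = n.-1.
  by rewrite -(card_incident i); apply: eq_card => q; rewrite !inE andbT.
have := handshake predT; rewrite (eq_bigr _ (fun i _ => deg i)) sum_nat_const card_ord.
by rewrite bin2 => ->; rewrite cardsE muln2 doubleK.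
Qed.

Lemma card_avoid a : #|[set q | ~~ incident a q]| = 'C(n.-1, 2).
Proof.
have n_gt0 : 0 < n by apply: leq_ltn_trans (ltn_ord a).
have := cardsC [set q | incident a q]; rewrite card_incident card_edges.
rewrite -[in 'C(n, 2)](prednK n_gt0) binS bin1.
rewrite addnC => /eqP; rewrite eqn_add2r => /eqP <-.
by apply: eq_card => q; rewrite !inE.
Qed.

Lemma odd_sum_odd (F : 'I_n -> nat) :
  (forall i, odd (F i)) -> odd (\sum_i F i) = odd n.
Proof.
move=> F_odd; suff: (\sum_i F i) %% 2 = n %% 2 by rewrite !modn2; do 2!case: odd.
rewrite -modn_summ (eq_bigr (fun _ => 1)) ?sum1_card ?card_ord // => i _.
by rewrite modn2 F_odd.
Qed.

Lemma odd_degrees_even_order (P : pred (edge n)) :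
  (forall i, odd #|[set q | incident i q && P q]|) -> ~~ odd n.
Proof. by move=> /odd_sum_odd <-; rewrite handshake muln2 odd_double. Qed.

End Edges.

Section Subdivision.
Variable n : nat.
Implicit Types (i : 'I_n) (p q : edge n) (S : {set SKn_V n}).

Lemma card_split S : #|S| = #|[set i | inl i \in S]| + #|[set p | inr p \in S]|.
Proof. by rewrite -!sum1dep_card -sum1_card big_sumType. Qed.

Lemma nbhd_inr p : nbhd (@SKn_adj n) (inr p) = [set inl (val p).1; inl (val p).2].
Proof.
by apply/setP => -[j|q]; rewrite !inE //= !(inj_eq (@inl_inj _ _)) !(eq_sym j).
Qed.

Lemma card_nbhd_inl i (P : pred (SKn_V n)) :
  #|[set w in nbhd (@SKn_adj n) (inl i) | P w]| = #|[set q | incident i q && P (inr q)]|.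
Proof.
rewrite card_split (_ : [set j | _] = set0) ?cards0 //; last by apply/setP => j; rewrite !inE.
by apply: eq_card => q; rewrite !inE.
Qed.

Lemma card_nbhd_inlI i S :
  #|nbhd (@SKn_adj n) (inl i) :&: S| = #|[set q | incident i q && (inr q \in S)]|.
Proof. by rewrite -card_nbhd_inl; apply: eq_card => w; rewrite !inE. Qed.

End Subdivision.

Section StrongOddColoring.
Variables (n k : nat) (c : SKn_V n -> 'I_k).
Hypothesis c_so : strong_odd_coloring (@SKn_adj n) c.
Implicit Types (i a : 'I_n) (p q : edge n) (x : 'I_k).

Lemma so_inr_neq i q : incident i q -> c (inl i) != c (inr q).
Proof. exact: c_so.1 (inl i) (inr q). Qed.

Lemma so_edge_ends p : c (inl (val p).1) != c (inl (val p).2).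
Proof.
apply/negP => /eqP eq_c; have := c_so.2 (inr p) (inl (val p).1).
rewrite nbhd_inr setU11 => /(_ isT).
rewrite setIdE (setIidPl _) ?cards2 ?(inj_eq (@inl_inj _ _)) ?edge_neq //.
by apply/subsetP => w; rewrite !inE => /orP[] /eqP ->; rewrite ?eq_c.
Qed.

Lemma so_inl_inj : injective (fun i => c (inl i)).
Proof.
move=> i j /= eq_c; apply/eqP; apply: contraT; rewrite eq_sym => ne_ji.
have [q inc_iq end_q] := other_end_onto ne_ji.
have := so_edge_ends q.
rewrite (edge_ends_other_end (f := fun a b => c (inl a) != c (inl b)) _ inc_iq).
  by rewrite end_q eq_c eqxx.
by move=> a b; rewrite eq_sym.
Qed.

Lemma so_colors_ge : n <= k.
Proof. by have := leq_card _ so_inl_inj; rewrite !card_ord. Qed.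

Lemma so_colors_ge3 : 1 < n -> 2 < k.
Proof.
move=> n_gt1; pose p : edge n := exist _ (Ordinal (ltnW n_gt1), Ordinal n_gt1) (ltnSn 0).
have inc1 : incident (val p).1 p by rewrite /incident eqxx.
have inc2 : incident (val p).2 p by rewrite /incident eqxx orbT.
have := so_edge_ends p; have := so_inr_neq inc1; have := so_inr_neq inc2.
move: (c (inl _)) (c (inl _)) (c (inr p)) => x y z; rewrite -!val_eqE /=.
by have := ltn_ord x; have := ltn_ord y; have := ltn_ord z; lia.
Qed.

Definition deg_color i x := #|[set q | incident i q && (c (inr q) == x)]|.

Lemma deg_color_odd i x : deg_color i x != 0 -> odd (deg_color i x).
Proof.
rewrite -lt0n card_gt0 => /set0Pn[q0]; rewrite inE => /andP[inc_iq0 /eqP <-].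
have := c_so.2 (inl i) (inr q0); rewrite !inE => /(_ inc_iq0).
by rewrite card_nbhd_inl.
Qed.

Lemma deg_color_self i : deg_color i (c (inl i)) = 0.
Proof.
apply: eq_card0 => q; rewrite !inE; apply/negbTE; rewrite negb_and.
by case: (boolP (incident i q)) => //= /so_inr_neq; rewrite eq_sym.
Qed.

Lemma deg_color_lt i a : a != i -> deg_color i (c (inl a)) < n.-1.
Proof.
move=> ne_ai; rewrite -(card_incident i); apply/proper_card/properP; split.
  by apply/subsetP => q; rewrite !inE => /andP[].
have [q inc_iq end_q] := other_end_onto ne_ai; exists q; rewrite !inE // inc_iq /=.
by rewrite eq_sym so_inr_neq // (incident_other_end _ inc_iq) end_q eqxx orbT.
Qed.

Lemma sum_deg_color i : \sum_x deg_color i x = n.-1.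
Proof.
rewrite -(card_incident i) -sum1dep_card (partition_big (fun q => c (inr q)) xpredT) //=.
by apply: eq_bigr => x _; rewrite sum1dep_card.
Qed.

End StrongOddColoring.

Lemma no_strong_odd_4coloring (c : SKn_V 4 -> 'I_4) : ~ strong_odd_coloring (@SKn_adj 4) c.
Proof.
move=> c_so.
have color_onto x : exists a, c (inl a) = x.
  by have /codomP[a ->] := inj_card_onto (so_inl_inj c_so) (leqnn _) x; exists a.
have deg_le i a : deg_color c i (c (inl a)) <= (a != i).
  have [->|ne_ai] := eqVneq a i; first by rewrite deg_color_self.
  have := deg_color_lt c_so ne_ai; have := @deg_color_odd _ _ _ c_so i (c (inl a)).
  by case: deg_color => [|[|[]]].
have color_total_le x : \sum_i deg_color c i x <= 2.
  have [a <-] := color_onto x.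
  have : \sum_i deg_color c i (c (inl a)) <= 3.
    apply: (@leq_trans (\sum_i (a != i : nat))); first by apply: leq_sum => i _.
    rewrite -big_mkcond sum1dep_card (eq_card (B := [set~ a])) ?cardsC1 ?card_ord //.
    by move=> i; rewrite !inE eq_sym.
  by rewrite /deg_color handshake; lia.
have : \sum_x \sum_i deg_color c i x <= \sum_(x < 4) 2 by apply: leq_sum => x _.
rewrite exchange_big /= (eq_bigr _ (fun i _ => sum_deg_color c i)).
by rewrite !sum_nat_const card_ord.
Qed.

Section EdgeColoring.
Variables (n k : nat) (col : nat -> nat -> nat).
Hypothesis le_nk : n <= k.
Hypothesis col_sym : forall i j : 'I_n, col i j = col j i.
Hypothesis col_lt : forall i j : 'I_n, i != j -> col i j < k.
Hypothesis col_neq : forall i j : 'I_n, i != j -> col i j != i.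
Hypothesis col_odd : forall i j : 'I_n, j != i ->
  odd #|[set j' : 'I_n | (j' != i) && (col i j' == col i j)]|.

(* The default value of [insubd] is never used, by [col_lt]. *)
Definition subdivision_coloring (x : SKn_V n) : 'I_k :=
  match x with
  | inl i => widen_ord le_nk i
  | inr p => insubd (widen_ord le_nk (val p).1) (col (val p).1 (val p).2)
  end.

Lemma subdivision_coloring_inr p :
  val (subdivision_coloring (inr p)) = col (val p).1 (val p).2.
Proof. by rewrite /= val_insubd col_lt // edge_neq. Qed.

Lemma subdivision_coloring_inl_inr i p :
  incident i p -> subdivision_coloring (inl i) != subdivision_coloring (inr p).
Proof.
rewrite -val_eqE subdivision_coloring_inr /= eq_sym => inc_ip.
rewrite (edge_ends_other_end (f := fun a b : 'I_n => col a b) col_sym inc_ip).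
by rewrite col_neq // eq_sym other_end_neq.
Qed.

Lemma subdivision_coloring_inl_inj : injective (fun i => subdivision_coloring (inl i)).
Proof. by move=> i j [] /val_inj. Qed.

Lemma subdivision_coloring_odd_inl i p : incident i p ->
  odd #|[set q | incident i q && (subdivision_coloring (inr q) == subdivision_coloring (inr p))]|.
Proof.
move=> inc_ip.
have col_ends q : incident i q -> col (val q).1 (val q).2 = col i (other_end i q).
  exact: (edge_ends_other_end (f := fun a b : 'I_n => col a b) col_sym).
pose P j := col i j == col i (other_end i p).
rewrite (eq_card (B := [set q | incident i q && P (other_end i q)])).
  by rewrite (card_incident_other_end i P) /P col_odd // other_end_neq.
move=> q; rewrite !inE -val_eqE !subdivision_coloring_inr (col_ends p inc_ip).
by case inc_iq: (incident i q); rewrite //= col_ends.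
Qed.

Lemma subdivision_coloring_strong_odd :
  strong_odd_coloring (@SKn_adj n) subdivision_coloring.
Proof.
split.
  move=> [i|p] [j|q] //= adj; first exact: subdivision_coloring_inl_inr.
  by rewrite eq_sym subdivision_coloring_inl_inr.
move=> [i|p] u.
  rewrite inE card_nbhd_inl; case: u => [//|p] /=; exact: subdivision_coloring_odd_inl.
rewrite nbhd_inr => u_ends; rewrite (_ : [set w in _ | _] = [set u]) ?cards1 //.
apply/setP => w; rewrite in_set1 inE andbC; apply/andP/eqP => [[]|->]; last by rewrite eqxx.
move: u_ends; rewrite !inE.
case: u w => [b|?] [a|?] //= _ /eqP /subdivision_coloring_inl_inj -> //.
Qed.
End EdgeColoring.

Lemma card_fiber1 n (f : 'I_n -> nat) i j :
  (forall j', j' != i -> f j' = f j -> j' = j) -> j != i ->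
  #|[set j' | (j' != i) && (f j' == f j)]| = 1.
Proof.
move=> f_inj ne_ji; rewrite -(cards1 j); apply: eq_card => j'; rewrite !inE.
by apply/andP/eqP => [[ne_j'i /eqP /f_inj]|->]; [apply | rewrite ne_ji].
Qed.

Lemma card_ord_lt n m : m <= n -> #|[set j : 'I_n | j < m]| = m.
Proof. by move=> le_mn; rewrite -sum1dep_card (big_ord_narrow le_mn) sum1_card card_ord. Qed.

(* [mid m i j] is the midpoint (i + j) / 2 in Z/mZ: for odd m, 2 is invertible
   modulo m with inverse (m + 1) / 2. *)
Definition mid m i j := ((i + j) * m.+1./2) %% m.

Section Midpoint.
Variable m : nat.
Hypothesis m_odd : odd m.

Lemma mid_sym i j : mid m i j = mid m j i.
Proof. by rewrite /mid addnC. Qed.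

Lemma mid_lt i j : mid m i j < m.
Proof. by rewrite ltn_pmod ?odd_gt0. Qed.

Lemma half_succ_mul2 : m.+1./2 * 2 = m.+1.
Proof. by rewrite muln2 halfK /= m_odd subn0. Qed.

Lemma mid_double i j : mid m i j * 2 = i + j %[mod m].
Proof. by rewrite modnMml -mulnA half_succ_mul2 mulnS addnC modnMDl. Qed.

Lemma eqn_mid2l i j j' : j < m -> j' < m -> (mid m i j == mid m i j') = (j == j').
Proof.
move=> lt_jm lt_j'm; apply/eqP/eqP => [eq_mid|->] //.
have := mid_double i j; rewrite eq_mid mid_double => /eqP.
by rewrite eqn_modDl !modn_small // => /eqP.
Qed.

Lemma mid_id i : i < m -> mid m i i = i.
Proof.
move=> lt_im; rewrite /mid addnn -muln2 -mulnA (mulnC 2) half_succ_mul2.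
by rewrite mulnS addnC modnMDl modn_small.
Qed.

End Midpoint.

Lemma strong_odd_coloring_odd n m : odd m -> n <= m ->
  exists c : SKn_V n -> 'I_m, strong_odd_coloring (@SKn_adj n) c.
Proof.
move=> m_odd le_nm; have lt_m (i : 'I_n) : i < m := leq_trans (ltn_ord i) le_nm.
exists (subdivision_coloring (mid m) le_nm); apply: subdivision_coloring_strong_odd.
- exact: mid_sym.
- by move=> i j _; apply: mid_lt.
- by move=> i j; rewrite -{2}(mid_id m_odd (lt_m i)) eqn_mid2l // eq_sym.
- move=> i j ne_ji; rewrite card_fiber1 // => j' _ /eqP.
  by rewrite eqn_mid2l // => /eqP /val_inj.
Qed.

Section ExtendedColoring.
Variable m : nat.
Hypotheses (m_odd : odd m) (m_gt2 : 2 < m).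

Definition shift3 j := m + (j - m).+1 %% 3.

(* The vertices below m form K_m, colored by midpoints mod m; the triangle
   m, m+1, m+2 is colored by midpoints mod 3, i.e. by colors below m; an edge
   from i < m to a vertex j >= m gets the color [shift3 j] of the next vertex
   of the triangle.  At a vertex of the triangle the m edges going down thus
   share one color, and m is odd. *)
Definition col_ext i j :=
  if i < m then (if j < m then mid m i j else shift3 j)
  else if j < m then shift3 i else mid 3 (i - m) (j - m).

Lemma col_ext_sym i j : col_ext i j = col_ext j i.
Proof. by rewrite /col_ext; case: (i < m); case: (j < m); rewrite // mid_sym. Qed.

Lemma shift3_ge j : m <= shift3 j.
Proof. exact: leq_addr. Qed.

Lemma shift3_lt j : shift3 j < m + 3.
Proof. by rewrite ltn_add2l ltn_pmod. Qed.

Lemma mid3_lt i j : mid 3 i j < m.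
Proof. exact: leq_trans (mid_lt _ _ _) m_gt2. Qed.

Lemma col_ext_lt i j : col_ext i j < m + 3.
Proof.
rewrite /col_ext; case: (i < m); case: (j < m); rewrite ?shift3_lt //.
  by rewrite ltn_addr ?mid_lt.
by rewrite ltn_addr ?mid3_lt.
Qed.

Lemma col_ext_low i j : (col_ext i j < m) = ((i < m) == (j < m)).
Proof.
rewrite /col_ext; case: (i < m); case: (j < m); rewrite ?mid3_lt ?mid_lt //.
  by rewrite ltnNge shift3_ge.
by rewrite ltnNge shift3_ge.
Qed.

Lemma col_ext_neq i j : i < m + 3 -> j != i -> col_ext i j != i.
Proof.
move=> lt_i ne_ji; rewrite /col_ext; case: ltnP => [lt_im|le_mi]; case: ltnP => lt_jm.
- by rewrite -{2}(mid_id m_odd lt_im) eqn_mid2l.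
- by rewrite gtn_eqF // (leq_trans lt_im (shift3_ge _)).
- by rewrite /shift3; move: lt_i le_mi; lia.
- by rewrite ltn_eqF // (leq_trans (mid3_lt _ _) le_mi).
Qed.

Lemma col_ext_inj v j j' : v < m + 3 -> j < m + 3 -> j' < m + 3 ->
  ~~ ((m <= v) && (j < m)) -> col_ext v j = col_ext v j' -> j = j'.
Proof.
move=> lt_v lt_j lt_j' not_high_low eq_col.
have same_side : (j < m) = (j' < m).
  by have := col_ext_low v j; rewrite eq_col col_ext_low; case: (v < m); do 2!case: (_ < m).
move: eq_col not_high_low; rewrite /col_ext -same_side.
case: ltnP => [lt_vm|le_mv]; case: ltnP => [lt_jm|le_mj] //=.
- by move=> /eqP; rewrite eqn_mid2l // -?same_side // => /eqP.
- by rewrite /shift3; move: le_mj same_side lt_j lt_j'; lia.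
- have [lt_j3 lt_j'3] : j - m < 3 /\ j' - m < 3 by move: lt_j lt_j'; lia.
  by move=> /eqP; rewrite eqn_mid2l // => /eqP; move: le_mj same_side; lia.
Qed.

Lemma strong_odd_coloring_ext :
  exists c : SKn_V (m + 3) -> 'I_(m + 3), strong_odd_coloring (@SKn_adj (m + 3)) c.
Proof.
exists (subdivision_coloring col_ext (leqnn (m + 3))); apply: subdivision_coloring_strong_odd.
- by move=> i j; apply: col_ext_sym.
- by move=> i j _; apply: col_ext_lt.
- by move=> i j ne_ij; apply: col_ext_neq; rewrite // eq_sym.
move=> v j ne_jv; have [/andP[le_mv lt_jm]|not_high_low] := boolP ((m <= v) && (j < m)).
  suff -> : [set j' : 'I_(m + 3) | (j' != v) && (col_ext v j' == col_ext v j)] =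
            [set j' : 'I_(m + 3) | j' < m] by rewrite card_ord_lt ?leq_addr.
  apply/setP => j'.
  rewrite !inE /col_ext ltnNge le_mv lt_jm /=; case: ltnP => [lt_j'm|le_mj'].
    by rewrite eqxx andbT; apply: contraTneq lt_j'm => ->; rewrite -leqNgt.
  by rewrite ltn_eqF ?andbF // (leq_trans (mid3_lt _ _) (shift3_ge _)).
rewrite card_fiber1 // => j' _ eq_col; apply/val_inj/esym.
exact: col_ext_inj (ltn_ord v) (ltn_ord j) (ltn_ord j') not_high_low (esym eq_col).
Qed.

End ExtendedColoring.

Lemma card_ord_neq2 n (i a : 'I_n) : a != i -> #|[set j | (j != i) && (j != a)]| = n - 2.
Proof.
move=> ne_ai; have := cardsD1 a [set~ i]; rewrite cardsC1 card_ord !inE ne_ai add1n.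
rewrite (_ : [set~ i] :\ a = [set j | (j != i) && (j != a)]); last first.
  by apply/setP => j; rewrite !inE andbC.
by move: (ltn_ord i); lia.
Qed.

Section OddIndependence.
Variables (T : finType) (e : rel T).

Lemma odd_independentP (S : {set T}) :
  reflect ((forall x y, x \in S -> y \in S -> ~~ e x y) /\
           (forall v, v \notin S -> (#|nbhd e v :&: S| == 0) || odd #|nbhd e v :&: S|))
          (odd_independent e S).
Proof.
apply: (iffP andP) => [[/forall_inP S_ind /forall_inP S_odd]|[S_ind S_odd]]; split.
- by move=> x y /S_ind /forall_inP; apply.
- by move=> v Sv; apply: S_odd; rewrite inE.
- by apply/forall_inP => x Sx; apply/forall_inP => y; exact: S_ind.
- by apply/forall_inP => v; rewrite inE; exact: S_odd.
Qed.

Lemma alpha_od_eq (b : nat) :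
  (forall S, odd_independent e S -> #|S| <= b) ->
  (exists2 S, odd_independent e S & #|S| = b) -> alpha_od e = b.
Proof.
move=> S_le [S0 S0_oi S0_card]; apply/eqP; rewrite eqn_leq; apply/andP; split.
  by apply/bigmax_leqP.
by rewrite -S0_card /alpha_od; apply: leq_bigmax_cond.
Qed.

End OddIndependence.

Section OddIndependentSubdivision.
Variables (n : nat) (S : {set SKn_V n}).
Hypothesis S_oi : odd_independent (@SKn_adj n) S.
Implicit Types (i a : 'I_n) (p q : edge n).

Let S_ind := (elimT (odd_independentP _ _) S_oi).1.
Let S_odd := (elimT (odd_independentP _ _) S_oi).2.

Lemma odd_indep_inl_le1 : #|[set i | inl i \in S]| <= 1.
Proof.
apply/card_le1_eqP => i j; rewrite !inE => Si Sj; apply/eqP; apply: contraT => ne_ji.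
have [q inc_iq end_q] := other_end_onto ne_ji.
have ends_S : (inl (val q).1 \in S) && (inl (val q).2 \in S).
  rewrite (edge_ends_other_end (f := fun a b => (inl a \in S) && (inl b \in S)) _ inc_iq).
    by rewrite end_q Si Sj.
  by move=> a b; rewrite andbC.
have Sq : inr q \notin S by apply/negP => /(S_ind Si) /negP; apply.
have := S_odd Sq; rewrite nbhd_inr (setIidPl _) ?cards2 ?(inj_eq (@inl_inj _ _)) ?edge_neq //.
by apply/subsetP => x; rewrite !inE => /orP[] /eqP ->; case/andP: ends_S.
Qed.

Lemma odd_indep_edges_avoid a : inl a \in S -> #|[set p | inr p \in S]| <= 'C(n.-1, 2).
Proof.
move=> Sa; rewrite -(card_avoid a); apply/subset_leq_card/subsetP => p.
by rewrite !inE => /(S_ind Sa).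
Qed.

Lemma odd_indep_edges_le : #|[set p | inr p \in S]| <= 'C(n, 2).
Proof. by rewrite -card_edges max_card. Qed.

Lemma odd_indep_edges_odd : odd n -> [set i | inl i \in S] = set0 ->
  #|[set p | inr p \in S]| <= 'C(n.-1, 2).
Proof.
move=> n_odd no_inl.
have [a deg_a|odd_deg] := pickP (fun i => #|[set q | incident i q && (inr q \in S)]| == 0).
  rewrite -(card_avoid a); apply/subset_leq_card/subsetP => p; rewrite !inE => Sp.
  by move: deg_a; rewrite cards_eq0 => /eqP/setP/(_ p); rewrite !inE Sp andbT => ->.
suff: ~~ odd n by rewrite n_odd.
apply: (odd_degrees_even_order (P := fun q => inr q \in S)) => i.
have Si : inl i \notin S by move/setP: no_inl => /(_ i); rewrite !inE => ->.
by have := S_odd Si; rewrite card_nbhd_inlI odd_deg.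
Qed.

Lemma odd_indep_card_le : 1 < n -> #|S| <= (if odd n then 'C(n.-1, 2) + 1 else 'C(n, 2)).
Proof.
move=> n_gt1; rewrite card_split.
have [no_inl|[a]] := set_0Vmem [set i | inl i \in S].
  rewrite no_inl cards0; case: ifP => [n_odd|_]; last exact: odd_indep_edges_le.
  by rewrite (leq_trans (odd_indep_edges_odd n_odd no_inl)) ?leq_addr.
rewrite inE => /odd_indep_edges_avoid le_edges; have le_inl := odd_indep_inl_le1.
have binC : 'C(n, 2) = 'C(n.-1, 2) + n.-1.
  by rewrite -[in LHS](prednK (ltnW n_gt1)) binS bin1 addnC.
by case: ifP; rewrite ?binC; lia.
Qed.

End OddIndependentSubdivision.

Lemma odd_indep_edges n : 0 < n -> ~~ odd n ->
  exists2 S, odd_independent (@SKn_adj n) S & #|S| = 'C(n, 2).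
Proof.
move=> n_gt0 n_even; exists [set x : SKn_V n | if x is inr _ then true else false].
  apply/odd_independentP; split; first by move=> [i|p] [j|q]; rewrite !inE.
  move=> [i|p]; rewrite inE // => _; rewrite card_nbhd_inlI.
  rewrite (eq_card (B := [set q | incident i q])) ?card_incident //.
    by rewrite -(prednK n_gt0) /= negbK in n_even; rewrite n_even orbT.
  by move=> q; rewrite !inE andbT.
rewrite card_split (eq_card0 (A := [set i | _])) => [|i]; last by rewrite !inE.
by rewrite add0n -card_edges -cardsT; apply: eq_card => p; rewrite !inE.
Qed.

Lemma odd_indep_vertex_avoid n (a : 'I_n) : odd n ->
  exists2 S, odd_independent (@SKn_adj n) S & #|S| = 'C(n.-1, 2) + 1.
Proof.
move=> n_odd.
pose S := [set x : SKn_V n | match x with inl i => i == a | inr p => ~~ incident a p end].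
exists S.
  apply/odd_independentP; split.
    move=> [i|p] [j|q]; rewrite !inE //=; first by move=> /eqP->.
    by move=> + /eqP->.
  move=> [i|p]; rewrite inE => S_v; apply/orP; right.
    rewrite card_nbhd_inlI.
    have -> : [set q | incident i q && (inr q \in S)] =
              [set q | incident i q && (fun j => j != a) (other_end i q)].
      apply/setP => q; rewrite !inE; case inc_iq: (incident i q) => //=.
      by rewrite (incident_other_end a inc_iq) (eq_sym a i) (negbTE S_v) eq_sym.
    rewrite (card_incident_other_end i (fun j => j != a)) card_ord_neq2 1?eq_sym //.
    have n_gt1 : 1 < n by move: (ltn_ord i) (ltn_ord a) S_v; rewrite -val_eqE /=; lia.
    by rewrite oddB // n_odd.
  rewrite negbK in S_v; rewrite nbhd_inr (_ : _ :&: S = [set inl a]) ?cards1 //.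
  apply/setP => -[j|q]; rewrite !inE //= !(inj_eq (@inl_inj _ _)).
  by case: (j =P a) => [->|]; rewrite ?andbT ?andbF.
rewrite card_split addnC; congr (_ + _).
  by rewrite -(card_avoid a); apply: eq_card => p; rewrite !inE.
by rewrite -(cards1 a); apply: eq_card => i; rewrite !inE.
Qed.

Lemma alpha_od_SKn n : 1 < n ->
  alpha_od (@SKn_adj n) = (if odd n then 'C(n.-1, 2) + 1 else 'C(n, 2)).
Proof.
move=> n_gt1; apply: alpha_od_eq => [S S_oi|]; first exact: odd_indep_card_le S_oi n_gt1.
case: ifP => n_odd; first exact: odd_indep_vertex_avoid (Ordinal (ltnW n_gt1)) n_odd.
exact: odd_indep_edges (ltnW n_gt1) (negbT n_odd).
Qed.

Lemma chi_so_SKn_lower n k (c : SKn_V n -> 'I_k) :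
  1 < n -> strong_odd_coloring (@SKn_adj n) c ->
  (if n == 2 then 3 else if n == 4 then 5 else n) <= k.
Proof.
move=> n_gt1 c_so; have := so_colors_ge c_so; have := so_colors_ge3 c_so n_gt1.
case: eqP => [_ //|_]; case: eqP => [n4|_ _ //]; subst n => _ le_4k.
have [k4|] := eqVneq k 4; last by move: le_4k; lia.
by subst k; case: (no_strong_odd_4coloring c_so).
Qed.

Lemma chi_so_SKn_upper n : 1 < n ->
  exists c : SKn_V n -> 'I_(if n == 2 then 3 else if n == 4 then 5 else n),
    strong_odd_coloring (@SKn_adj n) c.
Proof.
move=> n_gt1; case: eqP => [->|ne2]; first exact: strong_odd_coloring_odd.
case: eqP => [->|ne4]; first exact: strong_odd_coloring_odd.
have [n_odd|n_even] := boolP (odd n); first exact: strong_odd_coloring_odd.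
have [m n_eq] : exists m, n = m + 3.
  by exists (n - 3); move: n_gt1 ne2 n_even {ne4}; case: n => [|[|[|n]]] //; lia.
subst n; have m_odd : odd m by move: n_even; rewrite addn3 /= !negbK.
have m_gt2 : 2 < m.
  by case: (m =P 2) m_odd => [-> //|ne_m2 /odd_gt0]; move: ne4 ne_m2; lia.
exact: strong_odd_coloring_ext.
Qed.

Theorem proposition10 (n : nat) :
  2 <= n ->
  chi_so_is (@SKn_adj n) (if n == 2 then 3 else if n == 4 then 5 else n) /\
  alpha_od (@SKn_adj n) = (if odd n then 'C(n.-1, 2) + 1 else 'C(n, 2)).
Proof.
move=> n_ge2; split; last exact: alpha_od_SKn.
split; first exact: chi_so_SKn_upper.
by move=> k lt_k [c /(chi_so_SKn_lower n_ge2)]; rewrite leqNgt lt_k.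
Qed.
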